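(* Let $A=\begin{bmatrix} a_1 & b_1 & 0\\ b_1 & a_2 & b_2\\ 0 & b_2 & a_3\end{bmatrix}$ be a positive semidefinite matrix with nonnegative entries $a_1,a_2,a_3,b_1,b_2\geq 0$. Then $A$ is infinitely divisible if and only if $b_1b_2=0$.
   Context: For a nonnegative matrix $A=[a_{ij}]$ and $r>0$, $A^{\circ r}=[a_{ij}^r]$. A nonnegative symmetric matrix $A$ is infinitely divisible if $A^{\circ r}$ is positive semidefinite for every $r>0$. *)

From mathcomp Require Import all_boot all_order all_algebra.
From mathcomp Require Import all_classical all_reals all_analysis.
Set Implicit Arguments. Unset Strict Implicit. Unset Printing Implicit Defensive.
Import Order.TTheory GRing.Theory Num.Theory.
Local Open Scope ring_scope.

Definition psd (R : realType) (n : nat) (A : 'M[R]_n) : Prop :=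
  A^T = A /\ forall x : 'cV[R]_n, 0 <= (x^T *m A *m x) 0 0.

Definition nonneg_mx (R : realType) (n : nat) (A : 'M[R]_n) : Prop :=
  forall i j, 0 <= A i j.

Definition hpow (R : realType) (n : nat) (A : 'M[R]_n) (r : R) : 'M[R]_n :=
  map_mx (fun a => powR a r) A.

Definition infinitely_divisible (R : realType) (n : nat) (A : 'M[R]_n) : Prop :=
  [/\ nonneg_mx A, A^T = A & forall r : R, 0 < r -> psd (hpow A r)].

Definition tri3 (R : realType) (a1 a2 a3 b1 b2 : R) : 'M[R]_3 :=
  \matrix_(i < 3, j < 3)
    nth 0 (nth [::] [:: [:: a1; b1; 0]; [:: b1; a2; b2]; [:: 0; b2; a3]] i) j.

From mathcomp Require Import all_boot all_order all_algebra.
From mathcomp Require Import all_classical all_reals all_analysis.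
From mathcomp Require Import ring lra.
Set Implicit Arguments. Unset Strict Implicit. Unset Printing Implicit Defensive.
Import Order.TTheory GRing.Theory Num.Theory.
Local Open Scope ring_scope.

(* If b1 b2 = 0 the matrix splits into a 1x1 and a 2x2 block, and a nonnegative
   2x2 block stays PSD under Hadamard powers because b^2 <= a a' is preserved
   by x |-> x^r.  If b1, b2 > 0, the 2x2 minors force a1, a2, a3 > 0, and as
   r -> 0 every entry of A^{o r} tends to 1 while det A^{o r} =
   a1^r a2^r a3^r - b1^2r a3^r - b2^2r a1^r.  Quantitatively, once
   r ln (a1 a2 / b1^2) and r ln (a2 a3 / b2^2) are at most 1/4 we get
   b1^2r >= 3/4 (a1 a2)^r and b2^2r >= 3/4 (a2 a3)^r, hence
   det A^{o r} <= -1/2 a1^r a2^r a3^r < 0. *)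

Section Tridiagonal.
Variable R : realType.

Definition col3 (s t u : R) : 'cV[R]_3 := \col_(i < 3) nth 0 [:: s; t; u] i.

Lemma tri3_qform (a1 a2 a3 b1 b2 : R) (x : 'cV[R]_3) :
  (x^T *m tri3 a1 a2 a3 b1 b2 *m x) 0 0 =
  a1 * x 0 0 ^+ 2 + a2 * x 1 0 ^+ 2 + a3 * x 2%:R 0 ^+ 2
  + 2 * b1 * x 0 0 * x 1 0 + 2 * b2 * x 1 0 * x 2%:R 0.
Proof.
rewrite !mxE !big_ord_recl big_ord0 /= !mxE !big_ord_recl !big_ord0 /= !mxE /=.
have -> : (lift ord0 ord0 : 'I_3) = 1 by apply/val_inj.
have -> : (lift ord0 (lift ord0 ord0) : 'I_3) = 2%:R by apply/val_inj.
have -> : (ord0 : 'I_3) = 0 by apply/val_inj.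
ring.
Qed.

Lemma tri3_qform_col3 (a1 a2 a3 b1 b2 s t u : R) :
  ((col3 s t u)^T *m tri3 a1 a2 a3 b1 b2 *m col3 s t u) 0 0 =
  a1 * s ^+ 2 + a2 * t ^+ 2 + a3 * u ^+ 2 + 2 * b1 * s * t + 2 * b2 * t * u.
Proof. by rewrite tri3_qform !mxE. Qed.

Lemma tri3_tr (a1 a2 a3 b1 b2 : R) :
  (tri3 a1 a2 a3 b1 b2)^T = tri3 a1 a2 a3 b1 b2.
Proof.
apply/matrixP => i j; rewrite !mxE.
by case: i => [[|[|[|i]]] Hi]; case: j => [[|[|[|j]]] Hj].
Qed.

Lemma tri3_nonneg (a1 a2 a3 b1 b2 : R) :
  0 <= a1 -> 0 <= a2 -> 0 <= a3 -> 0 <= b1 -> 0 <= b2 ->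
  nonneg_mx (tri3 a1 a2 a3 b1 b2).
Proof.
move=> *; move=> i j; rewrite !mxE.
by case: i => [[|[|[|i]]] Hi]; case: j => [[|[|[|j]]] Hj].
Qed.

Lemma hpow_tri3 (a1 a2 a3 b1 b2 r : R) : 0 < r ->
  hpow (tri3 a1 a2 a3 b1 b2) r =
  tri3 (a1 `^ r) (a2 `^ r) (a3 `^ r) (b1 `^ r) (b2 `^ r).
Proof.
move=> r_gt0; apply/matrixP => i j; rewrite !mxE.
by case: i => [[|[|[|i]]] Hi]; case: j => [[|[|[|j]]] Hj] //=; rewrite powR0 ?gt_eqF.
Qed.

Lemma binary_qform_ge0 (p q c s t : R) :
  0 <= p -> 0 <= q -> c ^+ 2 <= p * q ->
  0 <= p * s ^+ 2 + 2 * c * s * t + q * t ^+ 2.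
Proof.
move=> p_ge0 q_ge0 c2_le.
have [p0|p_neq0] := eqVneq p 0.
  move: c2_le; rewrite p0 mul0r => c2_le0.
  have -> : c = 0 by apply/eqP; rewrite -sqrf_eq0 eq_le sqr_ge0 andbT.
  by rewrite !(mul0r, mulr0, add0r) mulr_ge0 ?sqr_ge0.
have p_gt0 : 0 < p by rewrite lt_def p_neq0.
rewrite -(pmulr_rge0 _ p_gt0).
have -> : p * (p * s ^+ 2 + 2 * c * s * t + q * t ^+ 2) =
          (p * s + c * t) ^+ 2 + (p * q - c ^+ 2) * t ^+ 2 by ring.
by rewrite addr_ge0 ?sqr_ge0 // mulr_ge0 ?sqr_ge0 // subr_ge0.
Qed.

Lemma binary_qform_ge0_sqr_le (p q c : R) : 0 <= p ->
  (forall s t, 0 <= p * s ^+ 2 + 2 * c * s * t + q * t ^+ 2) ->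
  c ^+ 2 <= p * q.
Proof.
move=> p_ge0 qform_ge0.
have q_ge0 : 0 <= q by have := qform_ge0 0 1; rewrite !expr2; lra.
have [p0|p_neq0] := eqVneq p 0.
  by have := qform_ge0 (- (q + 1)) c; rewrite p0; nra.
have p_gt0 : 0 < p by rewrite lt_def p_neq0.
by have := qform_ge0 c (- p); nra.
Qed.

Lemma psd_tri3_minors (a1 a2 a3 b1 b2 : R) : 0 <= a1 -> 0 <= a2 ->
  psd (tri3 a1 a2 a3 b1 b2) -> b1 ^+ 2 <= a1 * a2 /\ b2 ^+ 2 <= a2 * a3.
Proof.
move=> a1_ge0 a2_ge0 [_ qform_ge0]; split; apply: binary_qform_ge0_sqr_le => // s t.
  by have := qform_ge0 (col3 s t 0); rewrite tri3_qform_col3; lra.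
by have := qform_ge0 (col3 0 s t); rewrite tri3_qform_col3; lra.
Qed.

(* The test vector is the second column of adj A, so the form equals
   (adj A)_22 * det A = a1 a3 det A. *)
Lemma psd_tri3_det (a1 a2 a3 b1 b2 : R) : 0 < a1 -> 0 < a3 ->
  psd (tri3 a1 a2 a3 b1 b2) -> b1 ^+ 2 * a3 + b2 ^+ 2 * a1 <= a1 * a2 * a3.
Proof.
move=> a1_gt0 a3_gt0 [_ qform_ge0].
have := qform_ge0 (col3 (- (b1 * a3)) (a1 * a3) (- (b2 * a1))).
rewrite tri3_qform_col3.
have -> : a1 * (- (b1 * a3)) ^+ 2 + a2 * (a1 * a3) ^+ 2 + a3 * (- (b2 * a1)) ^+ 2
    + 2 * b1 * - (b1 * a3) * (a1 * a3) + 2 * b2 * (a1 * a3) * - (b2 * a1) =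
    (a1 * a3) * (a1 * a2 * a3 - (b1 ^+ 2 * a3 + b2 ^+ 2 * a1)) by ring.
by rewrite pmulr_rge0 ?mulr_gt0 // subr_ge0.
Qed.

Lemma psd_tri3 (a1 a2 a3 b1 b2 : R) :
  0 <= a1 -> 0 <= a2 -> 0 <= a3 ->
  b1 ^+ 2 <= a1 * a2 -> b2 ^+ 2 <= a2 * a3 -> b1 * b2 = 0 ->
  psd (tri3 a1 a2 a3 b1 b2).
Proof.
move=> a1_ge0 a2_ge0 a3_ge0 m1 m2 /eqP; rewrite mulf_eq0 => b12.
split=> [|x]; first exact: tri3_tr.
rewrite tri3_qform.
have a1x := mulr_ge0 a1_ge0 (sqr_ge0 (x 0 0)).
have a3x := mulr_ge0 a3_ge0 (sqr_ge0 (x 2%:R 0)).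
case/orP: b12 => /eqP->.
  by have := binary_qform_ge0 (x 1 0) (x 2%:R 0) a2_ge0 a3_ge0 m2; lra.
by have := binary_qform_ge0 (x 0 0) (x 1 0) a1_ge0 a2_ge0 m1; lra.
Qed.

Lemma powR_sqr_le (p q c r : R) : 0 <= r -> 0 <= p -> 0 <= q -> 0 <= c ->
  c ^+ 2 <= p * q -> (c `^ r) ^+ 2 <= p `^ r * q `^ r.
Proof.
move=> r_ge0 p_ge0 q_ge0 c_ge0 c2_le.
rewrite expr2 -!powRM //; apply: ge0_ler_powR; rewrite ?nnegrE -?expr2 //.
  exact: sqr_ge0.
exact: mulr_ge0.
Qed.

Lemma powR_three_quarters_le (x y r : R) : 0 < x -> 0 < y ->
  r * (ln x - ln y) <= 1 / 4 -> 3 / 4 * x `^ r <= y `^ r.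
Proof.
move=> x_gt0 y_gt0 small_r.
rewrite /powR !gt_eqF //.
have -> : expR (r * ln y) = expR (r * ln x) * expR (- (r * (ln x - ln y))).
  by rewrite -expRD; congr expR; ring.
rewrite mulrC; apply: ler_wpM2l; first exact/ltW/expR_gt0.
by apply: le_trans (expR_ge1Dx _); lra.
Qed.

Lemma tri3_not_psd (a1 a2 a3 b1 b2 : R) : 0 < a1 -> 0 < a2 -> 0 < a3 ->
  3 / 4 * (a1 * a2) <= b1 ^+ 2 -> 3 / 4 * (a2 * a3) <= b2 ^+ 2 ->
  ~ psd (tri3 a1 a2 a3 b1 b2).
Proof.
move=> a1_gt0 a2_gt0 a3_gt0 b1_large b2_large /(psd_tri3_det a1_gt0 a3_gt0).
have := ler_wpM2r (ltW a3_gt0) b1_large; have := ler_wpM2r (ltW a1_gt0) b2_large.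
have := mulr_gt0 (mulr_gt0 a1_gt0 a2_gt0) a3_gt0.
lra.
Qed.

Lemma exists_scale_le (d1 d2 e : R) : 0 < e ->
  exists2 r : R, 0 < r & r * d1 <= e /\ r * d2 <= e.
Proof.
move=> e_gt0; have D_gt0 : 0 < 1 + `|d1| + `|d2| by rewrite ltr_wpDr // ltr_wpDr.
exists (e / (1 + `|d1| + `|d2|)); first exact: divr_gt0.
have le_e (d : R) : `|d| <= 1 + `|d1| + `|d2| -> e / (1 + `|d1| + `|d2|) * d <= e.
  move=> d_le; rewrite mulrAC ler_pdivrMr //.
  by apply: le_trans (ler_wpM2l (ltW e_gt0) d_le); rewrite ler_pM2l // ler_norm.
by split; apply: le_e; have := normr_ge0 d1; have := normr_ge0 d2; lra.
Qed.

Lemma tri3_hpow_not_psd (a1 a2 a3 b1 b2 : R) :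
  0 < a1 -> 0 < a2 -> 0 < a3 -> 0 < b1 -> 0 < b2 ->
  exists2 r : R, 0 < r & ~ psd (hpow (tri3 a1 a2 a3 b1 b2) r).
Proof.
move=> a1_gt0 a2_gt0 a3_gt0 b1_gt0 b2_gt0.
have quarter_gt0 : 0 < 1 / 4 :> R by lra.
have [r r_gt0 [small1 small2]] := exists_scale_le
  (ln (a1 * a2) - ln (b1 * b1)) (ln (a2 * a3) - ln (b2 * b2)) quarter_gt0.
exists r => //; rewrite hpow_tri3 //.
apply: tri3_not_psd; rewrite ?powR_gt0 // expr2 -!powRM; try exact: ltW.
- by apply: powR_three_quarters_le; rewrite ?mulr_gt0.
- by apply: powR_three_quarters_le; rewrite ?mulr_gt0.
Qed.

End Tridiagonal.

Unset Implicit Arguments.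

Theorem lemma2p5 (R : realType) (a1 a2 a3 b1 b2 : R) :
  0 <= a1 -> 0 <= a2 -> 0 <= a3 -> 0 <= b1 -> 0 <= b2 ->
  psd (tri3 a1 a2 a3 b1 b2) ->
  (infinitely_divisible (tri3 a1 a2 a3 b1 b2) <-> b1 * b2 = 0).
Proof.
move=> a1_ge0 a2_ge0 a3_ge0 b1_ge0 b2_ge0 A_psd.
have [m1 m2] := psd_tri3_minors a1_ge0 a2_ge0 A_psd.
split=> [[_ _ hpow_psd] | b12].
  apply/eqP/contraT; rewrite mulf_eq0 negb_or => /andP[b1_neq0 b2_neq0].
  have b1_gt0 : 0 < b1 by rewrite lt_def b1_neq0.
  have b2_gt0 : 0 < b2 by rewrite lt_def b2_neq0.
  have a1a2_gt0 : 0 < a1 * a2 by apply: lt_le_trans m1; rewrite exprn_gt0.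
  have a2a3_gt0 : 0 < a2 * a3 by apply: lt_le_trans m2; rewrite exprn_gt0.
  have a1_gt0 : 0 < a1 by nra.
  have a2_gt0 : 0 < a2 by nra.
  have a3_gt0 : 0 < a3 by nra.
  have [r r_gt0 not_psd] := tri3_hpow_not_psd a1_gt0 a2_gt0 a3_gt0 b1_gt0 b2_gt0.
  by have := not_psd (hpow_psd r r_gt0).
split; [exact: tri3_nonneg | exact: tri3_tr | move=> r r_gt0].
rewrite hpow_tri3 //; apply: psd_tri3; rewrite ?powR_ge0 //.
- exact: powR_sqr_le (ltW r_gt0) a1_ge0 a2_ge0 b1_ge0 m1.
- exact: powR_sqr_le (ltW r_gt0) a2_ge0 a3_ge0 b2_ge0 m2.
- by rewrite -powRM // b12 powR0 ?gt_eqF.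
Qed.
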